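(* Let $\sigma_{01},\sigma_{12}>0$, $\sigma_{02}=\sigma_{01}+\sigma_{12}$, let $\Gamma_{11},\Gamma_{22}\ge0$ and $\Gamma_{12}=\Gamma_{21}=0$, and let $M=(M_1,M_2)$ with $M_1,M_2>0$. Then a minimizing configuration for $\overline{e_0}(M)$ cannot contain two different types of single bubbles, i.e. there are no indices $k,l$ with $m^k=(m_1^k,0)$, $m_1^k>0$, and $m^l=(0,m_2^l)$, $m_2^l>0$.
   Context: For $m=(m_1,m_2)$ with $m_1,m_2\ge0$ set $$e_0(m)=2\sigma_{01}\sqrt{\pi(m_1+m_2)}+2\sigma_{12}\sqrt{\pi m_2}+\sum_{i,j=1}^2\frac{\Gamma_{ij}m_im_j}{4\pi}.$$ $\overline{e_0}(M)=\inf\{\sum_{k\ge1}e_0(m^k): m^k=(m_1^k,m_2^k),\ m_i^k\ge0,\ \sum_k m_i^k=M_i,\ i=1,2\}$; a minimizing configuration is an admissible sequence $(m^k)$ attaining the infimum. *)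

From Stdlib Require Import Reals ClassicalEpsilon.
From Coquelicot Require Import Coquelicot.
Open Scope R_scope.

Definition e0 (s01 s12 G11 G12 G21 G22 : R) (m : R * R) : R :=
  let m1 := fst m in let m2 := snd m in
  2 * s01 * sqrt (PI * (m1 + m2)) + 2 * s12 * sqrt (PI * m2)
  + (G11 * m1 * m1 + G12 * m1 * m2 + G21 * m2 * m1 + G22 * m2 * m2) / (4 * PI).

(* Admissible sequence (m^k)_k (indexed by nat instead of k >= 1):
   m_i^k >= 0 and sum_k m_i^k = M_i. *)
Definition admissible (M1 M2 : R) (m : nat -> R * R) : Prop :=
  (forall k, 0 <= fst (m k) /\ 0 <= snd (m k)) /\
  is_series (fun k => fst (m k)) M1 /\ is_series (fun k => snd (m k)) M2.

Definition total_energy (s01 s12 G11 G12 G21 G22 : R) (m : nat -> R * R) : Rbar :=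
  match excluded_middle_informative
          (ex_series (fun k => e0 s01 s12 G11 G12 G21 G22 (m k))) with
  | left _ => Finite (Series (fun k => e0 s01 s12 G11 G12 G21 G22 (m k)))
  | right _ => p_infty
  end.

Definition e0bar (s01 s12 G11 G12 G21 G22 M1 M2 : R) : Rbar :=
  Glb_Rbar (fun E => exists m, admissible M1 M2 m /\
              total_energy s01 s12 G11 G12 G21 G22 m = Finite E).

Definition minimizing (s01 s12 G11 G12 G21 G22 M1 M2 : R) (m : nat -> R * R) : Prop :=
  admissible M1 M2 m /\
  total_energy s01 s12 G11 G12 G21 G22 m = e0bar s01 s12 G11 G12 G21 G22 M1 M2.

(* Merging a bubble (a, 0) with a bubble (0, b) into (a, b), and leaving an empty bubble in place of
   the second one, keeps the configuration admissible.  Since the cross interactions G12, G21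
   vanish, the self-interaction and the s12 terms are unchanged, while the s01 term drops by
   2 s01 (sqrt (pi a) + sqrt (pi b) - sqrt (pi (a + b))) > 0 by strict subadditivity of sqrt.
   This contradicts minimality. *)
From Stdlib Require Import Reals Lra Lia ClassicalEpsilon.
From Coquelicot Require Import Coquelicot.
Open Scope R_scope.

Lemma sqrt_add_lt (x y : R) : 0 < x -> 0 < y -> sqrt (x + y) < sqrt x + sqrt y.
Proof.
  intros Hx Hy.
  pose proof (sqrt_lt_R0 x Hx) as Sx; pose proof (sqrt_lt_R0 y Hy) as Sy.
  rewrite <- (sqrt_square (sqrt x + sqrt y)) by lra.
  apply sqrt_lt_1_alt; split; [lra|].
  pose proof (sqrt_sqrt x (Rlt_le _ _ Hx)) as Ex; pose proof (sqrt_sqrt y (Rlt_le _ _ Hy)) as Ey.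
  nra.
Qed.

Definition update {A : Type} (f : nat -> A) (k : nat) (x : A) : nat -> A :=
  fun n => if Nat.eq_dec n k then x else f n.

Lemma sum_n_indicator (k : nat) (c : R) (N : nat) :
  (k <= N)%nat -> sum_n (update (fun _ => 0) k c) N = c.
Proof.
  set (d := update (fun _ => 0) k c).
  assert (Hbelow : forall j, (j < k)%nat -> sum_n d j = 0).
  { induction j as [|j IH]; intro Hj.
    - rewrite sum_O; unfold d, update; destruct (Nat.eq_dec 0 k); [lia | reflexivity].
    - rewrite sum_Sn, IH by lia; unfold d, update.
      destruct (Nat.eq_dec (S j) k); [lia |]; unfold plus; simpl; lra. }
  induction N as [|N IH]; intro HkN.
  - rewrite sum_O; unfold d, update; destruct (Nat.eq_dec 0 k); [reflexivity | lia].
  - rewrite sum_Sn; unfold d at 2, update.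
    destruct (Nat.eq_dec (S N) k) as [<-|Hne].
    + rewrite Hbelow by lia; unfold plus; simpl; lra.
    + rewrite IH by lia; unfold plus; simpl; lra.
Qed.

Lemma is_series_indicator (k : nat) (c : R) : is_series (update (fun _ => 0) k c) c.
Proof.
  apply (filterlim_ext_loc (fun _ => c)).
  - exists k; intros N HN; symmetry; exact (sum_n_indicator k c N HN).
  - apply filterlim_const.
Qed.

Lemma is_series_update (f : nat -> R) (s : R) (k : nat) (c : R) :
  is_series f s -> is_series (update f k c) (s + (c - f k)).
Proof.
  intro Hf.
  eapply is_series_ext; [|exact (is_series_plus _ _ _ _ Hf (is_series_indicator k (c - f k)))].
  intro n; unfold update, plus; simpl; destruct (Nat.eq_dec n k) as [->|]; lra.
Qed.

Definition merge (m : nat -> R * R) (k l : nat) : nat -> R * R :=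
  update (update m k (fst (m k) + fst (m l), snd (m k) + snd (m l))) l (0, 0).

Lemma is_series_merge (g : R * R -> R) (m : nat -> R * R) (k l : nat) (s : R) :
  k <> l -> is_series (fun n => g (m n)) s ->
  is_series (fun n => g (merge m k l n))
    (s + (g (fst (m k) + fst (m l), snd (m k) + snd (m l)) - g (m k) - g (m l) + g (0, 0))).
Proof.
  intros Hkl Hs.
  set (p := (fst (m k) + fst (m l), snd (m k) + snd (m l))).
  pose proof (is_series_update _ _ l (g (0, 0)) (is_series_update _ _ k (g p) Hs)) as H.
  assert (Hl : update (fun n => g (m n)) k (g p) l = g (m l)).
  { unfold update; destruct (Nat.eq_dec l k); congruence. }
  rewrite Hl in H.
  replace (s + (g p - g (m k)) + (g (0, 0) - g (m l)))
    with (s + (g p - g (m k) - g (m l) + g (0, 0))) in H by ring.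
  eapply is_series_ext; [|exact H].
  intro n; unfold merge, update; destruct (Nat.eq_dec n l), (Nat.eq_dec n k); reflexivity.
Qed.

Lemma admissible_merge M1 M2 (m : nat -> R * R) (k l : nat) :
  k <> l -> admissible M1 M2 m -> admissible M1 M2 (merge m k l).
Proof.
  intros Hkl [Hnn [H1 H2]]; split; [|split].
  - intro n; unfold merge, update.
    destruct (Nat.eq_dec n l); [simpl; lra|].
    destruct (Nat.eq_dec n k) as [->|]; [|apply Hnn].
    pose proof (Hnn k); pose proof (Hnn l); simpl in *; lra.
  - pose proof (is_series_merge fst m k l M1 Hkl H1) as H; simpl in H.
    replace (M1 + (fst (m k) + fst (m l) - fst (m k) - fst (m l) + 0)) with M1 in H by ring.
    exact H.
  - pose proof (is_series_merge snd m k l M2 Hkl H2) as H; simpl in H.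
    replace (M2 + (snd (m k) + snd (m l) - snd (m k) - snd (m l) + 0)) with M2 in H by ring.
    exact H.
Qed.

Section Energy.

Variables (s01 s12 G11 G12 G21 G22 : R).

Lemma total_energy_is_series (m : nat -> R * R) (E : R) :
  is_series (fun n => e0 s01 s12 G11 G12 G21 G22 (m n)) E ->
  total_energy s01 s12 G11 G12 G21 G22 m = Finite E.
Proof.
  intro HE; unfold total_energy.
  destruct excluded_middle_informative as [_|Hdiv].
  - f_equal; exact (is_series_unique _ _ HE).
  - exfalso; apply Hdiv; exists E; exact HE.
Qed.

Lemma e0_0 : e0 s01 s12 G11 G12 G21 G22 (0, 0) = 0.
Proof.
  unfold e0; simpl; rewrite Rplus_0_r, Rmult_0_r, sqrt_0.
  pose proof PI_RGT_0; field; lra.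
Qed.

Lemma e0bar_le M1 M2 (m : nat -> R * R) (E : R) :
  admissible M1 M2 m -> total_energy s01 s12 G11 G12 G21 G22 m = Finite E ->
  Rbar_le (e0bar s01 s12 G11 G12 G21 G22 M1 M2) E.
Proof.
  intros Hm HE; apply Glb_Rbar_correct; exists m; split; assumption.
Qed.

Lemma minimizing_le M1 M2 (m m' : nat -> R * R) (E E' : R) :
  minimizing s01 s12 G11 G12 G21 G22 M1 M2 m ->
  is_series (fun n => e0 s01 s12 G11 G12 G21 G22 (m n)) E ->
  admissible M1 M2 m' -> total_energy s01 s12 G11 G12 G21 G22 m' = Finite E' ->
  E <= E'.
Proof.
  intros [_ Hmin] HE Hm' HE'.
  pose proof (e0bar_le M1 M2 m' E' Hm' HE') as Hlb.
  rewrite <- Hmin, (total_energy_is_series _ _ HE) in Hlb.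
  exact Hlb.
Qed.

(* The single bubble (M1, M2) is a competitor of finite energy, so the infimum is not [+oo]. *)
Lemma minimizing_ex_series M1 M2 (m : nat -> R * R) :
  0 <= M1 -> 0 <= M2 ->
  minimizing s01 s12 G11 G12 G21 G22 M1 M2 m ->
  ex_series (fun n => e0 s01 s12 G11 G12 G21 G22 (m n)).
Proof.
  intros HM1 HM2 [_ Hmin].
  set (single := update (fun _ => (0, 0)) 0 (M1, M2)).
  assert (Hsingle : forall (g : R * R -> R), g (0, 0) = 0 ->
      is_series (fun n => g (single n)) (g (M1, M2))).
  { intros g Hg; eapply is_series_ext; [|exact (is_series_indicator 0 (g (M1, M2)))].
    intro n; unfold single, update; destruct (Nat.eq_dec n 0); congruence. }
  assert (Hadm : admissible M1 M2 single).
  { split; [|split; [exact (Hsingle fst eq_refl) | exact (Hsingle snd eq_refl)]].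
    intro n; unfold single, update; destruct (Nat.eq_dec n 0); simpl; lra. }
  pose proof (total_energy_is_series _ _ (Hsingle _ e0_0)) as HE.
  pose proof (e0bar_le M1 M2 single _ Hadm HE) as Hlb; rewrite <- Hmin in Hlb.
  unfold total_energy in Hlb.
  destruct excluded_middle_informative as [Hex|]; [exact Hex | contradiction].
Qed.

Lemma e0_merge_lt (p q : R * R) :
  0 < s01 -> G12 = 0 -> G21 = 0 ->
  snd p = 0 -> 0 < fst p -> fst q = 0 -> 0 < snd q ->
  e0 s01 s12 G11 G12 G21 G22 (fst p + fst q, snd p + snd q)
  < e0 s01 s12 G11 G12 G21 G22 p + e0 s01 s12 G11 G12 G21 G22 q.
Proof.
  destruct p as [a p2], q as [q1 b]; simpl; intros Hs01 -> -> -> Ha -> Hb.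
  pose proof PI_RGT_0 as Hpi.
  pose proof (sqrt_add_lt (PI * a) (PI * b) ltac:(nra) ltac:(nra)) as Hsub.
  rewrite <- Rmult_plus_distr_l in Hsub.
  unfold e0; simpl; rewrite Rplus_0_r, Rplus_0_l, Rmult_0_r, sqrt_0.
  apply Rminus_lt_0.
  replace (_ - _) with (2 * s01 * (sqrt (PI * a) + sqrt (PI * b) - sqrt (PI * (a + b))))
    by (field; lra).
  nra.
Qed.

End Energy.

Theorem lemma3p4 (s01 s12 s02 G11 G12 G21 G22 M1 M2 : R) (m : nat -> R * R) :
  0 < s01 -> 0 < s12 -> s02 = s01 + s12 ->
  0 <= G11 -> 0 <= G22 -> G12 = 0 -> G21 = 0 ->
  0 < M1 -> 0 < M2 ->
  minimizing s01 s12 G11 G12 G21 G22 M1 M2 m ->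
  ~ (exists k l : nat,
       snd (m k) = 0 /\ 0 < fst (m k) /\ fst (m l) = 0 /\ 0 < snd (m l)).
Proof.
  intros Hs01 _ _ _ _ HG12 HG21 HM1 HM2 Hmin [k [l [Hk2 [Hk1 [Hl1 Hl2]]]]].
  assert (Hkl : k <> l) by (intros ->; lra).
  destruct (minimizing_ex_series _ _ _ _ _ _ M1 M2 m (Rlt_le _ _ HM1) (Rlt_le _ _ HM2) Hmin)
    as [E HE].
  pose proof (is_series_merge _ m k l E Hkl HE) as Hmerge.
  pose proof (minimizing_le _ _ _ _ _ _ M1 M2 m (merge m k l) E _ Hmin HE
                (admissible_merge M1 M2 m k l Hkl (proj1 Hmin))
                (total_energy_is_series _ _ _ _ _ _ _ _ Hmerge)) as Hle.
  pose proof (e0_merge_lt s01 s12 G11 G12 G21 G22 (m k) (m l) Hs01 HG12 HG21 Hk2 Hk1 Hl1 Hl2)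
    as Hlt.
  rewrite e0_0 in Hle.
  lra.
Qed.
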